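(* Let $A,C>0$ be given constants and let $r>0$ be a fixed constant. For $N$ sufficiently large the following holds: for any $x\in I_W$ there does not exist a real number $D$ with $r\le D\le N^{A}$ such that \[\sum_{i=1}^n\|D\,b_i(x)\|_{\mathbb R/\mathbb Z}^2\le C\log N.\]
   Context: Let $0<c_1<c_2$ be constants, $n$ a large integer and $M$ a large parameter (possibly growing with $n$) with $I_W:=[c_1M,c_2M]\subset[0,\sqrt n-M]$; set $N:=M$. For $x>0$ and $1\le i\le n$ let $b_i(x)=\sqrt N\,e^{-x^2/2}\,x^i/\sqrt{i!}$. For $t\in\mathbb R$, $\|t\|_{\mathbb R/\mathbb Z}$ denotes the distance from $t$ to the nearest integer. *)

From Stdlib Require Import Reals Lra List Factorial.
Open Scope R_scope.

Definition frac_part (t : R) : R := t - IZR (Int_part t).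
Definition distZ (t : R) : R := Rmin (frac_part t) (1 - frac_part t).

Definition b (N : R) (i : nat) (x : R) : R :=
  sqrt N * exp (- x ^ 2 / 2) * x ^ i / sqrt (INR (fact i)).

Definition sum1n (n : nat) (f : nat -> R) : R :=
  fold_right Rplus 0 (map f (seq 1 n)).

From Pilot Require Import Defs.
From Stdlib Require Import Reals Lra Lia List Factorial ZArith.
From Coquelicot Require Import Coquelicot.
Open Scope R_scope.

(* Write f k = D b_k(x) = b_k(D^2 N) and lambda = x^2, i0 = floor lambda.  Then
   f(k)^2 = D^2 N e^-lambda lambda^k / k! is a scaled Poisson weight and f(k+1) = f(k) x / sqrt (k+1),
   so f is nonincreasing from i0 on and, within T steps of lambda, loses at most a factor
   1 - T / lambda per step.
   - If f(i0) < 3/4: Stirling bounds f(i0)^2 below by e^-2 D^2 N / x >= r^2 e^-2 / c2, and for the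
     next x/2 indices f stays in [3/4 f(i0), 3/4), so each of these x/2 >> log N terms has
     ||f(k)||^2 bounded below.
   - If f(i0) >= 3/4: f(i0)^2 <= D^2 N <= N^(2A+1), while after 2 h >= 2 x log N more steps the
     Gaussian factor exp (- h^2 / (2 lambda)) <= N^(- log N / 2) pushes f below 1/4.  So f crosses
     3/4 before that, and the slow descent keeps it in [3/8, 3/4) for the next 16 C log N + 1
     indices.
   Either way the sum exceeds C log N. *)

Lemma exp_le (a b : R) : a <= b -> exp a <= exp b.
Proof. intros [Hlt | ->]; [left; apply exp_increasing | right]; auto. Qed.

Lemma exp_pow (a : R) (n : nat) : exp a ^ n = exp (INR n * a).
Proof.
  induction n as [| n IH].
  - rewrite Rmult_0_l, exp_0. reflexivity.
  - rewrite <- tech_pow_Rmult, IH, <- exp_plus, S_INR. f_equal; ring.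
Qed.

Lemma sqrt_exp (a : R) : sqrt (exp a) = exp (a / 2).
Proof.
  replace (exp a) with (exp (a / 2) ^ 2) by (rewrite exp_pow; f_equal; simpl; field).
  apply sqrt_pow2. left; apply exp_pos.
Qed.

Lemma ln_1p_ge (t : R) : 0 <= t -> 2 * t / (2 + t) <= ln (1 + t).
Proof.
  intros Ht. destruct (Req_dec t 0) as [-> | Ht0].
  { rewrite !Rplus_0_r, ln_1. lra. }
  set (g := fun u => ln (1 + u) - 2 * u / (2 + u)).
  set (g' := fun u => u ^ 2 / ((1 + u) * (2 + u) ^ 2)).
  assert (Hg' : forall c, 0 <= c <= t -> derivable_pt_lim g c (g' c)).
  { intros c Hc. apply is_derive_Reals. unfold g, g'. auto_derive.
    - repeat split; lra.
    - field; lra. }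
  destruct (MVT_cor2 g g' 0 t ltac:(lra) Hg') as [c [Hgt Hc]].
  assert (0 <= g' c).
  { unfold g'. apply Rmult_le_pos; [apply pow2_ge_0 |].
    left; apply Rinv_0_lt_compat, Rmult_lt_0_compat; [| apply pow_lt]; lra. }
  assert (g 0 = 0) by (unfold g; rewrite Rplus_0_r, ln_1; field).
  unfold g in *. nra.
Qed.

(* [ln y <= y] at [y = M^(1/k)]. *)
Lemma ln_pow_le (k : nat) (M : R) : (1 <= k)%nat -> 1 <= M -> ln M ^ k <= INR k ^ k * M.
Proof.
  intros Hk HM.
  assert (Hk0 : 0 < INR k) by (apply lt_0_INR; lia).
  set (y := Rpower M (/ INR k)).
  assert (Hy : 0 < y) by apply exp_pos.
  assert (Hyk : y ^ k = M).
  { rewrite <- Rpower_pow by exact Hy. unfold y. rewrite Rpower_mult, Rinv_l, Rpower_1; lra. }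
  assert (Hlny : INR k * ln y = ln M) by (unfold y; rewrite ln_Rpower; field; lra).
  assert (Hlny_le : ln y <= y).
  { pose proof (exp_ineq1_le (ln y)) as H. rewrite exp_ln in H by exact Hy. lra. }
  assert (HlnM : 0 <= ln M) by (rewrite <- ln_1; apply ln_le; lra).
  rewrite <- Hyk at 2. rewrite <- Rpow_mult_distr. apply pow_incr. nra.
Qed.

Lemma ln_sq_eventually_le (k c : R) : 0 < c ->
  exists N0, forall M, N0 <= M -> 1 <= M /\ k <= ln M /\ k * ln M ^ 2 <= c * M.
Proof.
  intros Hc. set (L0 := Rmax 1 (Rmax k (27 * k / c))).
  assert (H1 : 1 <= L0) by apply Rmax_l.
  assert (Hk : k <= L0) by (eapply Rle_trans; [apply Rmax_l | apply Rmax_r]).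
  assert (Hkc : 27 * k / c <= L0) by (eapply Rle_trans; [apply Rmax_r | apply Rmax_r]).
  exists (exp L0). intros M HM.
  pose proof (exp_ineq1_le L0).
  assert (HL : L0 <= ln M) by (rewrite <- (ln_exp L0); apply ln_le; [apply exp_pos | exact HM]).
  assert (HM1 : 1 <= M) by lra.
  pose proof (ln_pow_le 3 M ltac:(lia) HM1) as Hcube. simpl INR in Hcube.
  assert (27 * k <= c * ln M).
  { apply Rmult_le_reg_r with (/ c); [apply Rinv_0_lt_compat; lra |].
    replace (c * ln M * / c) with (ln M) by (field; lra). unfold Rdiv in Hkc. lra. }
  split; [exact HM1 | split; [lra |]].
  assert (0 <= ln M ^ 2) by apply pow2_ge_0. nra.
Qed.

Lemma exp_neg15_lt : exp (-15) < 1 / 16.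
Proof.
  pose proof (exp_ineq1 15 ltac:(lra)). pose proof (exp_pos 15).
  replace (exp (-15)) with (/ exp 15) by (rewrite <- exp_Ropp; f_equal; lra).
  apply Rmult_lt_reg_r with (16 * exp 15); [lra |].
  field_simplify; lra.
Qed.

Lemma inv_1p_le_exp (u : R) : 0 <= u <= 1 -> / (1 + u) <= exp (- (u / 2)).
Proof.
  intros Hu.
  pose proof (exp_ineq1_le (- (u / (1 + u)))) as H.
  replace (1 + - (u / (1 + u))) with (/ (1 + u)) in H by (field; lra).
  eapply Rle_trans; [exact H | apply exp_le].
  apply Ropp_le_contravar. apply Rmult_le_reg_r with (2 * (1 + u)); [lra |].
  replace (u / 2 * (2 * (1 + u))) with (u * (1 + u)) by field.
  replace (u / (1 + u) * (2 * (1 + u))) with (2 * u) by (field; lra). nra.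
Qed.

Lemma exp1_le_pow_1p_inv (i : nat) : (1 <= i)%nat ->
  exp 1 <= (1 + / INR i) ^ i * sqrt (1 + / INR i).
Proof.
  intros Hi. assert (Hip : 0 < INR i) by (apply lt_0_INR; lia).
  set (t := / INR i). assert (Ht : 0 < t) by (apply Rinv_0_lt_compat; lra).
  rewrite <- (exp_ln (1 + t)) by lra.
  rewrite exp_pow, sqrt_exp, <- exp_plus. apply exp_le.
  (* [ln_1p_ge] at [t = 1/i] is exactly [(i + 1/2) ln (1 + 1/i) >= 1]. *)
  assert (Hone : (INR i + 1 / 2) * (2 * t / (2 + t)) = 1) by (unfold t; field; lra).
  pose proof (ln_1p_ge t ltac:(lra)).
  replace (INR i * ln (1 + t) + ln (1 + t) / 2) with ((INR i + 1 / 2) * ln (1 + t)) by field.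
  rewrite <- Hone at 1. apply Rmult_le_compat_l; lra.
Qed.

Lemma fact_stirling_le (i : nat) : (1 <= i)%nat ->
  INR (fact i) * exp (INR i) <= exp 1 * (INR i ^ i * sqrt (INR i)).
Proof.
  induction i as [| i IH]; intros Hi; [lia |].
  destruct (Nat.eq_dec i 0) as [-> | Hi0].
  { simpl. rewrite sqrt_1. lra. }
  specialize (IH ltac:(lia)).
  assert (Hip : 0 < INR i) by (apply lt_0_INR; lia).
  set (P := INR i ^ i * sqrt (INR i)).
  set (Q := (1 + / INR i) ^ i * sqrt (1 + / INR i)).
  assert (HQ : exp 1 <= Q) by (apply exp1_le_pow_1p_inv; lia).
  assert (HP : 0 <= P) by (apply Rmult_le_pos; [apply pow_le; lra | apply sqrt_pos]).
  assert (Hsplit : INR (S i) ^ i * sqrt (INR (S i)) = P * Q).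
  { replace (INR (S i)) with (INR i * (1 + / INR i)) by (rewrite S_INR; field; lra).
    unfold P, Q. rewrite Rpow_mult_distr, sqrt_mult; [ring | lra |].
    assert (0 < / INR i) by (apply Rinv_0_lt_compat; lra). lra. }
  assert (He : 0 < exp 1) by apply exp_pos.
  assert (Hs : 0 < INR (S i)) by (apply lt_0_INR; lia).
  rewrite fact_simpl, mult_INR, <- tech_pow_Rmult.
  replace (exp (INR (S i))) with (exp (INR i) * exp 1) by (rewrite S_INR, exp_plus; ring).
  replace (exp 1 * (INR (S i) * INR (S i) ^ i * sqrt (INR (S i))))
    with (INR (S i) * exp 1 * (P * Q)) by (rewrite <- Hsplit; ring).
  replace (INR (S i) * INR (fact i) * (exp (INR i) * exp 1))
    with (INR (S i) * exp 1 * (INR (fact i) * exp (INR i))) by ring.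
  apply Rmult_le_compat_l; [nra |].
  apply Rle_trans with (exp 1 * P); [exact IH | nra].
Qed.

Lemma poisson_mode_ge (y : R) (i : nat) : (1 <= i)%nat -> INR i <= y < INR i + 1 ->
  exp (-2) / sqrt y <= exp (- y) * y ^ i / INR (fact i).
Proof.
  intros Hi Hy.
  assert (Hip : 0 < INR i) by (apply lt_0_INR; lia).
  assert (Hf : 0 < INR (fact i)) by apply INR_fact_lt_0.
  assert (Hsy : 0 < sqrt y) by (apply sqrt_lt_R0; lra).
  assert (Hbound : INR (fact i) * exp y <= exp 2 * (y ^ i * sqrt y)).
  { assert (INR i ^ i * sqrt (INR i) <= y ^ i * sqrt y).
    { apply Rmult_le_compat; [apply pow_le; lra | apply sqrt_pos | apply pow_incr; lra |].
      apply sqrt_le_1; lra. }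
    assert (exp y <= exp (INR i) * exp 1) by (rewrite <- exp_plus; apply exp_le; lra).
    pose proof (fact_stirling_le i Hi). pose proof (exp_pos 1). pose proof (exp_pos (INR i)).
    replace (exp 2) with (exp 1 * exp 1) by (rewrite <- exp_plus; f_equal; ring).
    apply Rle_trans with (INR (fact i) * (exp (INR i) * exp 1)); [apply Rmult_le_compat_l; lra |].
    nra. }
  replace (exp (-2)) with (/ exp 2) by (rewrite <- exp_Ropp; f_equal; lra).
  rewrite exp_Ropp.
  pose proof (exp_pos 2). pose proof (exp_pos y).
  apply Rmult_le_reg_r with (exp 2 * exp y * sqrt y * INR (fact i)).
  { repeat apply Rmult_lt_0_compat; lra. }
  replace (/ exp 2 / sqrt y * (exp 2 * exp y * sqrt y * INR (fact i)))
    with (INR (fact i) * exp y) by (field; lra).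
  replace (/ exp y * y ^ i / INR (fact i) * (exp 2 * exp y * sqrt y * INR (fact i)))
    with (exp 2 * (y ^ i * sqrt y)) by (field; lra).
  exact Hbound.
Qed.

Lemma pow_div_fact_le_exp (y : R) (i : nat) : 0 <= y -> y ^ i / INR (fact i) <= exp y.
Proof.
  intros Hy. eapply Rle_trans; [| apply (exp_ge_taylor y i Hy)].
  destruct i as [| i]; [simpl; lra |].
  rewrite tech5.
  assert (0 <= sum_f_R0 (fun k => y ^ k / INR (fact k)) i); [| lra].
  apply cond_pos_sum. intros k. apply Rmult_le_pos; [apply pow_le; lra |].
  left; apply Rinv_0_lt_compat, INR_fact_lt_0.
Qed.

Lemma distZ_ge (t d : R) : 0 < d -> d <= t <= 1 - d -> d <= distZ t.
Proof.
  intros Hd Ht. unfold distZ, Defs.frac_part.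
  assert (Int_part t = 0%Z) by (symmetry; apply (Int_part_frac_part_spec t 0 t); simpl; lra).
  rewrite H. simpl. apply Rmin_glb; lra.
Qed.

Definition nat_floor (y : R) : nat := Z.to_nat (Int_part y).

Lemma nat_floor_spec (y : R) : 0 <= y -> INR (nat_floor y) <= y < INR (nat_floor y) + 1.
Proof.
  intros Hy. destruct (base_Int_part y) as [H1 H2].
  assert (Hz : (0 <= Int_part y)%Z).
  { assert (IZR (-1) < IZR (Int_part y)) by lra. apply lt_IZR in H. lia. }
  unfold nat_floor. rewrite INR_IZR_INZ, Z2Nat.id by exact Hz. lra.
Qed.

Lemma fold_Rplus_app (l1 l2 : list R) :
  fold_right Rplus 0 (l1 ++ l2) = fold_right Rplus 0 l1 + fold_right Rplus 0 l2.
Proof. induction l1 as [| a l1 IH]; simpl; [ring | rewrite IH; ring]. Qed.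

Lemma fold_Rplus_map_nonneg (h : nat -> R) (l : list nat) :
  (forall i, 0 <= h i) -> 0 <= fold_right Rplus 0 (map h l).
Proof.
  intros Hh. induction l as [| a l IH]; simpl; [lra |]. pose proof (Hh a). lra.
Qed.

Lemma fold_Rplus_seq_ge (h : nat -> R) (d : R) (a m : nat) :
  (forall j, (j < m)%nat -> d <= h (a + j)%nat) ->
  INR m * d <= fold_right Rplus 0 (map h (seq a m)).
Proof.
  revert a. induction m as [| m IH]; intros a Hblock; [simpl; lra |].
  rewrite S_INR. cbn [seq map fold_right].
  pose proof (Hblock 0%nat ltac:(lia)) as H0. rewrite Nat.add_0_r in H0.
  assert (INR m * d <= fold_right Rplus 0 (map h (seq (S a) m))).
  { apply IH. intros j Hj. rewrite Nat.add_succ_comm. apply Hblock. lia. }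
  lra.
Qed.

Lemma sum1n_ge_block (h : nat -> R) (d : R) (n a m : nat) :
  (forall i, 0 <= h i) -> (1 <= a)%nat -> (a + m <= n + 1)%nat ->
  (forall j, (j < m)%nat -> d <= h (a + j)%nat) -> INR m * d <= sum1n n h.
Proof.
  intros Hh Ha Hm Hblock. unfold sum1n.
  replace n with ((a - 1) + (m + (n + 1 - a - m)))%nat by lia.
  rewrite !seq_app, !map_app, !fold_Rplus_app.
  replace (1 + (a - 1))%nat with a by lia.
  pose proof (fold_Rplus_seq_ge h d a m Hblock).
  pose proof (fold_Rplus_map_nonneg h (seq 1 (a - 1)) Hh).
  pose proof (fold_Rplus_map_nonneg h (seq (a + m) (n + 1 - a - m)) Hh).
  lra.
Qed.

Lemma sum1n_ext (n : nat) (f g : nat -> R) : (forall i, f i = g i) -> sum1n n f = sum1n n g.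
Proof. intros Hfg. unfold sum1n. f_equal. apply map_ext, Hfg. Qed.

Lemma exists_crossing (P : nat -> Prop) (K : nat) : (forall k, P k \/ ~ P k) ->
  P 0%nat -> ~ P K -> exists k, (k < K)%nat /\ P k /\ ~ P (S k).
Proof.
  intros Hdec H0. induction K as [| K IH]; intros HK; [contradiction |].
  destruct (Hdec K) as [HP | HnP].
  - exists K. auto.
  - destruct (IH HnP) as [k Hk]. exists k. intuition lia.
Qed.

Section SlowDescent.

Variable g : nat -> R.

Lemma slow_decay_ge (a m : nat) (e G : R) : 0 <= e -> INR m * e <= 1 -> 0 <= G <= g a ->
  (forall j, (j < m)%nat -> (1 - e) * g (a + j)%nat <= g (a + S j)%nat) ->
  forall j, (j <= m)%nat -> (1 - INR j * e) * G <= g (a + j)%nat.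
Proof.
  intros He Hme HG Hstep. induction j as [| j IH]; intros Hj.
  - rewrite Nat.add_0_r. simpl. lra.
  - specialize (IH ltac:(lia)). specialize (Hstep j ltac:(lia)).
    assert (Hj1 : INR (S j) <= INR m) by (apply le_INR; exact Hj).
    rewrite S_INR in *.
    assert (He1 : e <= 1).
    { pose proof (pos_INR j). assert (e * 1 <= e * INR m) by (apply Rmult_le_compat_l; lra). lra. }
    assert ((1 - e) * ((1 - INR j * e) * G) <= (1 - e) * g (a + j)%nat)
      by (apply Rmult_le_compat_l; lra).
    assert (0 <= INR j * e * e * G)
      by (repeat apply Rmult_le_pos; auto using pos_INR; lra).
    lra.
Qed.

Lemma band_after_crossing (a0 K m : nat) (e : R) :
  (forall i j, g (a0 + i + j)%nat <= g (a0 + i)%nat) ->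
  0 <= e -> INR m * e <= 1 / 2 ->
  (forall k, (k < K + m)%nat -> (1 - e) * g (a0 + k)%nat <= g (a0 + S k)%nat) ->
  3 / 4 <= g a0 -> g (a0 + K)%nat < 3 / 4 ->
  exists a, (a0 < a)%nat /\ (a + m <= a0 + K + m)%nat /\
    forall j, (j < m)%nat -> 3 / 8 <= g (a + j)%nat < 3 / 4.
Proof.
  intros Hmono He Hme Hstep Hstart Hend.
  destruct (exists_crossing (fun k => 3 / 4 <= g (a0 + k)%nat) K) as [k [Hk [Hin Hout]]].
  - intros k. destruct (Rle_lt_dec (3 / 4) (g (a0 + k)%nat)); [left | right]; lra.
  - rewrite Nat.add_0_r. exact Hstart.
  - lra.
  - exists (a0 + S k)%nat. split; [lia | split; [lia |]].
    intros j Hj. split.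
    + pose proof (slow_decay_ge (a0 + k) m e (3 / 4) He ltac:(lra) ltac:(lra)) as Hdecay.
      specialize (Hdecay ltac:(intros j' Hj'; rewrite <- !Nat.add_assoc, Nat.add_succ_r;
                               apply Hstep; lia) (S j) Hj).
      assert (INR (S j) * e <= INR m * e) by (apply Rmult_le_compat_r; [lra | apply le_INR; lia]).
      replace (a0 + S k + j)%nat with (a0 + k + S j)%nat by lia. lra.
    + pose proof (Hmono (S k) j). lra.
Qed.

End SlowDescent.

Lemma b_succ (N x : R) (i : nat) : b N (S i) x = b N i x * (x / sqrt (INR (S i))).
Proof.
  unfold b. rewrite fact_simpl, mult_INR, sqrt_mult by (apply pos_INR).
  assert (0 < sqrt (INR (fact i))) by apply sqrt_lt_R0, INR_fact_lt_0.
  assert (0 < sqrt (INR (S i))) by (apply sqrt_lt_R0, lt_0_INR; lia).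
  rewrite <- (tech_pow_Rmult x i). field. lra.
Qed.

Lemma b_pos (N x : R) (i : nat) : 0 < N -> 0 < x -> 0 < b N i x.
Proof.
  intros HN Hx. unfold b.
  assert (0 < sqrt (INR (fact i))) by apply sqrt_lt_R0, INR_fact_lt_0.
  apply Rdiv_lt_0_compat; [| lra].
  apply Rmult_lt_0_compat; [apply Rmult_lt_0_compat; [apply sqrt_lt_R0 | apply exp_pos] |];
    auto using pow_lt.
Qed.

Lemma b_scale (D N x : R) (i : nat) : 0 <= D -> 0 <= N -> D * b N i x = b (D ^ 2 * N) i x.
Proof.
  intros HD HN. unfold b. rewrite sqrt_mult, sqrt_pow2 by (try apply pow2_ge_0; lra).
  unfold Rdiv. ring.
Qed.

Lemma b_sqr (N x : R) (i : nat) : 0 <= N ->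
  b N i x ^ 2 = N * (exp (- x ^ 2) * (x ^ 2) ^ i / INR (fact i)).
Proof.
  intros HN. unfold b.
  assert (0 < INR (fact i)) by apply INR_fact_lt_0.
  assert (0 < sqrt (INR (fact i))) by (apply sqrt_lt_R0; lra).
  rewrite <- pow_mult, Nat.mul_comm, pow_mult.
  replace ((sqrt N * exp (- x ^ 2 / 2) * x ^ i / sqrt (INR (fact i))) ^ 2)
    with (sqrt N ^ 2 * exp (- x ^ 2 / 2) ^ 2 * (x ^ i) ^ 2 / sqrt (INR (fact i)) ^ 2)
    by (field; lra).
  rewrite !pow2_sqrt, exp_pow by lra.
  replace (INR 2 * (- x ^ 2 / 2)) with (- x ^ 2) by (simpl; field).
  field. lra.
Qed.

Lemma b_sqr_le (N x : R) (i : nat) : 0 <= N -> b N i x ^ 2 <= N.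
Proof.
  intros HN. rewrite b_sqr by exact HN.
  rewrite <- (Rmult_1_r N) at 2. apply Rmult_le_compat_l; [exact HN |].
  pose proof (exp_pos (x ^ 2)). pose proof (INR_fact_lt_0 i).
  replace (exp (- x ^ 2) * (x ^ 2) ^ i / INR (fact i))
    with ((x ^ 2) ^ i / INR (fact i) * / exp (x ^ 2)) by (rewrite exp_Ropp; field; lra).
  apply Rmult_le_reg_r with (exp (x ^ 2)); [lra |].
  rewrite Rmult_assoc, Rinv_l, Rmult_1_r, Rmult_1_l by lra.
  apply pow_div_fact_le_exp, pow2_ge_0.
Qed.

Lemma b_mode_sqr_ge (N x : R) (i0 : nat) : 0 < N -> 1 <= x ->
  INR i0 <= x ^ 2 < INR i0 + 1 -> exp (-2) * N / x <= b N i0 x ^ 2.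
Proof.
  intros HN Hx Hi0.
  assert (Hi0pos : (1 <= i0)%nat).
  { destruct i0; [simpl in Hi0; nra | lia]. }
  rewrite b_sqr by lra.
  pose proof (poisson_mode_ge (x ^ 2) i0 Hi0pos Hi0) as Hp.
  rewrite sqrt_pow2 in Hp by lra.
  replace (exp (-2) * N / x) with (N * (exp (-2) / x)) by (field; lra).
  apply Rmult_le_compat_l; lra.
Qed.

Lemma b_succ_ge (N x T : R) (i : nat) : 0 < N -> 0 < x -> 0 <= T ->
  INR (S i) <= x ^ 2 + T -> (1 - T / x ^ 2) * b N i x <= b N (S i) x.
Proof.
  intros HN Hx HT Hi.
  pose proof (b_pos N x i HN Hx) as Hb. pose proof (b_pos N x (S i) HN Hx).
  assert (Hx2 : 0 < x ^ 2) by (apply pow_lt; lra).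
  set (e := T / x ^ 2).
  assert (He : 0 <= e) by (apply Rmult_le_pos; [lra | left; apply Rinv_0_lt_compat; lra]).
  destruct (Rle_lt_dec e 1) as [He1 | He1]; [| nra].
  assert (Hs : 0 < sqrt (INR (S i))) by (apply sqrt_lt_R0, lt_0_INR; lia).
  (* [(1 - e)^2 (i + 1) <= (1 - e)^2 (1 + e) x^2 <= x^2] *)
  assert (Hkey : (1 - e) * sqrt (INR (S i)) <= x).
  { rewrite <- (sqrt_pow2 (1 - e)) by lra.
    rewrite <- sqrt_mult by (apply pow2_ge_0 || apply pos_INR).
    rewrite <- (sqrt_pow2 x) by lra.
    apply sqrt_le_1; [apply Rmult_le_pos; [apply pow2_ge_0 | apply pos_INR] | apply pow2_ge_0 |].
    apply Rle_trans with ((1 - e) ^ 2 * (x ^ 2 * (1 + e))).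
    - apply Rmult_le_compat_l; [apply pow2_ge_0 |]. unfold e. field_simplify; lra.
    - replace ((1 - e) ^ 2 * (x ^ 2 * (1 + e))) with (x ^ 2 * ((1 - e) * (1 - e * e))) by ring.
      assert ((1 - e) * (1 - e * e) <= 1) by nra. nra. }
  rewrite b_succ, Rmult_comm. apply Rmult_le_compat_l; [lra |].
  apply Rmult_le_reg_r with (sqrt (INR (S i))); [exact Hs |].
  unfold Rdiv. rewrite Rmult_assoc, Rinv_l; lra.
Qed.

Lemma b_succ_le (N x T : R) (i : nat) : 0 < N -> 0 < x -> 0 <= T ->
  x ^ 2 + T <= INR (S i) -> b N (S i) x <= x / sqrt (x ^ 2 + T) * b N i x.
Proof.
  intros HN Hx HT Hi.
  pose proof (b_pos N x i HN Hx) as Hb.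
  assert (Hx2 : 0 < x ^ 2) by (apply pow_lt; lra).
  assert (Hs : 0 < sqrt (x ^ 2 + T)) by (apply sqrt_lt_R0; lra).
  assert (sqrt (x ^ 2 + T) <= sqrt (INR (S i))) by (apply sqrt_le_1; lra).
  rewrite b_succ, Rmult_comm. apply Rmult_le_compat_r; [lra |].
  unfold Rdiv. apply Rmult_le_compat_l; [lra |]. apply Rinv_le_contravar; lra.
Qed.

Lemma b_nonincreasing (N x : R) (i0 : nat) : 0 < N -> 0 < x -> x ^ 2 < INR i0 + 1 ->
  forall i j, b N (i0 + i + j) x <= b N (i0 + i) x.
Proof.
  intros HN Hx Hi0 i j. induction j as [| j IH].
  - rewrite Nat.add_0_r. lra.
  - rewrite Nat.add_succ_r.
    eapply Rle_trans; [apply (b_succ_le N x 0); auto; try lra |].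
    + rewrite S_INR, !plus_INR. pose proof (pos_INR i). pose proof (pos_INR j). lra.
    + rewrite Rplus_0_r, sqrt_pow2, Rdiv_diag, Rmult_1_l; lra.
Qed.

(* Past [i0 + h] every step loses the factor [x / sqrt (x^2 + h)]; [h] such steps give the
   Gaussian factor [exp (- h^2 / (2 x^2))]. *)
Lemma b_sqr_decay (N x : R) (i0 h : nat) : 0 < N -> 0 < x -> x ^ 2 < INR i0 + 1 ->
  INR h <= x ^ 2 -> b N (i0 + h + h) x ^ 2 <= exp (- (INR h ^ 2 / (2 * x ^ 2))) * b N i0 x ^ 2.
Proof.
  intros HN Hx Hi0 Hh.
  assert (Hx2 : 0 < x ^ 2) by (apply pow_lt; lra).
  pose proof (pos_INR h) as Hh0.
  set (q := x / sqrt (x ^ 2 + INR h)).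
  assert (Hsq : 0 < sqrt (x ^ 2 + INR h)) by (apply sqrt_lt_R0; lra).
  assert (Hq : 0 <= q) by (left; apply Rdiv_lt_0_compat; lra).
  assert (Hgeom : forall j, b N (i0 + h + j) x <= q ^ j * b N (i0 + h) x).
  { induction j as [| j IH]; [rewrite Nat.add_0_r; simpl; lra |].
    rewrite Nat.add_succ_r. eapply Rle_trans; [apply (b_succ_le N x (INR h)); auto |].
    - rewrite S_INR, !plus_INR. pose proof (pos_INR j). lra.
    - rewrite <- (tech_pow_Rmult q j), Rmult_assoc. apply Rmult_le_compat_l; assumption. }
  set (u := INR h / x ^ 2).
  assert (Hu : 0 <= u <= 1).
  { unfold u. split; [apply Rmult_le_pos; [lra | left; apply Rinv_0_lt_compat; lra] |].
    apply Rmult_le_reg_r with (x ^ 2); [lra |]. field_simplify; lra. }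
  assert (Hq2 : q ^ 2 = / (1 + u)).
  { unfold q, u, Rdiv. rewrite Rpow_mult_distr, pow_inv, pow2_sqrt by lra. field. lra. }
  pose proof (b_pos N x (i0 + h + h) HN Hx).
  pose proof (b_nonincreasing N x i0 HN Hx Hi0 0 h) as Hmono. rewrite Nat.add_0_r in Hmono.
  assert (Hfac : exp (- (u / 2)) ^ h = exp (- (INR h ^ 2 / (2 * x ^ 2)))).
  { rewrite exp_pow. f_equal. unfold u. field. lra. }
  apply Rle_trans with ((q ^ h * b N (i0 + h) x) ^ 2); [apply pow_incr; split; [lra | apply Hgeom] |].
  rewrite Rpow_mult_distr, <- pow_mult, Nat.mul_comm, pow_mult, Hq2, <- Hfac.
  apply Rmult_le_compat; [apply pow_le, Rlt_le, Rinv_0_lt_compat; lra | apply pow2_ge_0 | |].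
  - apply pow_incr. split; [left; apply Rinv_0_lt_compat; lra | apply inv_1p_le_exp; exact Hu].
  - apply pow_incr. split; [left; apply b_pos |]; assumption.
Qed.

Lemma b_flat_after_mode (N x : R) (i0 j : nat) : 0 < N -> 1 <= x ->
  INR i0 <= x ^ 2 < INR i0 + 1 -> INR j <= x / 2 ->
  3 / 4 * b N i0 x <= b N (i0 + j) x <= b N i0 x.
Proof.
  intros HN Hx Hi0 Hj.
  assert (Hx2 : 0 < x ^ 2) by nra.
  pose proof (pos_INR j) as Hj0.
  set (e := INR j / x ^ 2).
  assert (He : 0 <= e) by (apply Rmult_le_pos; [lra | left; apply Rinv_0_lt_compat; lra]).
  assert (Hje : INR j * e <= 1 / 4).
  { unfold e. apply Rmult_le_reg_r with (x ^ 2); [lra |].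
    replace (INR j * (INR j / x ^ 2) * x ^ 2) with (INR j * INR j) by (field; lra). nra. }
  split.
  - assert (Hstep : forall k, (k < j)%nat -> (1 - e) * b N (i0 + k) x <= b N (i0 + S k) x).
    { intros k Hk. rewrite Nat.add_succ_r. apply b_succ_ge; [lra | lra | lra |].
      assert (INR (S k) <= INR j) by (apply le_INR; lia).
      rewrite S_INR, plus_INR in *. lra. }
    pose proof (b_pos N x i0 HN ltac:(lra)).
    pose proof (slow_decay_ge (fun k => b N k x) i0 j e (b N i0 x) He ltac:(lra)
      ltac:(split; [lra | apply Rle_refl]) Hstep j (Nat.le_refl j)) as Hdecay.
    assert (3 / 4 * b N i0 x <= (1 - INR j * e) * b N i0 x) by (apply Rmult_le_compat_r; lra).
    cbv beta in Hdecay. lra.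
  - pose proof (b_nonincreasing N x i0 HN ltac:(lra) ltac:(lra) 0 j) as Hmono.
    rewrite Nat.add_0_r in Hmono. exact Hmono.
Qed.

Lemma sum_ge_small_mode (N x : R) (n i0 : nat) : 0 < N -> 1 <= x -> x ^ 2 + x / 2 <= INR n ->
  INR i0 <= x ^ 2 < INR i0 + 1 -> b N i0 x < 3 / 4 ->
  x / 2 * Rmin (3 / 4 * b N i0 x) (1 / 4) ^ 2 <= sum1n n (fun i => distZ (b N i x) ^ 2).
Proof.
  intros HN Hx Hn Hi0 Hsmall.
  set (F := b N i0 x) in *.
  assert (HF : 0 < F) by (apply b_pos; lra).
  set (d := Rmin (3 / 4 * F) (1 / 4)).
  assert (Hd : 0 < d) by (apply Rmin_pos; lra).
  set (K := nat_floor (x / 2)).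
  destruct (nat_floor_spec (x / 2)) as [HK1 HK2]; [lra |]. fold K in HK1, HK2.
  assert (Hi0pos : (1 <= i0)%nat) by (destruct i0; [simpl in Hi0; nra | lia]).
  assert (Hblock : (i0 + S K <= n + 1)%nat).
  { apply INR_le. rewrite !plus_INR, S_INR. simpl INR. lra. }
  apply Rle_trans with (INR (S K) * d ^ 2).
  { rewrite S_INR. apply Rmult_le_compat_r; [apply pow2_ge_0 | lra]. }
  apply (sum1n_ge_block _ _ n i0 (S K) (fun i => pow2_ge_0 _) Hi0pos Hblock).
  intros j Hj.
  assert (Hjx : INR j <= x / 2) by (assert (INR j <= INR K) by (apply le_INR; lia); lra).
  destruct (b_flat_after_mode N x i0 j HN Hx Hi0 Hjx) as [Hlo Hhi]. fold F in Hlo, Hhi.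
  apply pow_incr. split; [lra |]. apply distZ_ge; [exact Hd |].
  split; [eapply Rle_trans; [apply Rmin_l | exact Hlo] |].
  assert (d <= 1 / 4) by apply Rmin_r. lra.
Qed.

Lemma b_tail_lt (N x : R) (i0 h : nat) : 0 < N -> 0 < x -> x ^ 2 < INR i0 + 1 ->
  INR h <= x ^ 2 -> ln N + 15 <= INR h ^ 2 / (2 * x ^ 2) -> b N (i0 + (h + h)) x < 1 / 4.
Proof.
  intros HN Hx Hi0 Hh Hgauss.
  rewrite Nat.add_assoc.
  pose proof (b_sqr_decay N x i0 h HN Hx Hi0 Hh) as Hdecay.
  pose proof (b_sqr_le N x i0 ltac:(lra)).
  assert (exp (- (INR h ^ 2 / (2 * x ^ 2))) * b N i0 x ^ 2 <= exp (-15)).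
  { eapply Rle_trans; [apply Rmult_le_compat_l; [left; apply exp_pos | eassumption] |].
    rewrite <- (exp_ln N HN), <- exp_plus. apply exp_le. lra. }
  pose proof exp_neg15_lt.
  destruct (Rlt_le_dec (b N (i0 + h + h) x) (1 / 4)) as [Hlt | Hge]; [exact Hlt |].
  assert ((1 / 4) ^ 2 <= b N (i0 + h + h) x ^ 2) by (apply pow_incr; lra). lra.
Qed.

Lemma sum_ge_after_crossing (N x : R) (n i0 h m : nat) : 0 < N -> 0 < x ->
  INR i0 <= x ^ 2 < INR i0 + 1 -> 3 / 4 <= b N i0 x -> b N (i0 + h) x < 3 / 4 ->
  INR m * (INR h + INR m) <= x ^ 2 / 2 -> (i0 + h + m <= n)%nat ->
  INR m / 16 <= sum1n n (fun i => distZ (b N i x) ^ 2).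
Proof.
  intros HN Hx Hi0 Hstart Hend Hm Hn.
  assert (Hx2 : 0 < x ^ 2) by (apply pow_lt; lra).
  pose proof (pos_INR h). pose proof (pos_INR m).
  set (e := (INR h + INR m) / x ^ 2).
  assert (He : 0 <= e) by (apply Rmult_le_pos; [lra | left; apply Rinv_0_lt_compat; lra]).
  assert (Hme : INR m * e <= 1 / 2).
  { unfold e. apply Rmult_le_reg_r with (x ^ 2); [lra |].
    replace (INR m * ((INR h + INR m) / x ^ 2) * x ^ 2) with (INR m * (INR h + INR m))
      by (field; lra). lra. }
  assert (Hstep : forall k, (k < h + m)%nat -> (1 - e) * b N (i0 + k) x <= b N (i0 + S k) x).
  { intros k Hk. rewrite Nat.add_succ_r. apply b_succ_ge; [lra | lra | lra |].
    assert (INR (S k) <= INR (h + m)) by (apply le_INR; lia).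
    rewrite S_INR, !plus_INR in *. lra. }
  destruct (band_after_crossing (fun k => b N k x) i0 h m e
    (b_nonincreasing N x i0 HN Hx (proj2 Hi0)) He Hme Hstep Hstart Hend) as [a [Ha [Ham Hband]]].
  replace (INR m / 16) with (INR m * (1 / 16)) by field.
  apply (sum1n_ge_block _ _ n a m (fun i => pow2_ge_0 _)); [lia | lia |].
  intros j Hj. destruct (Hband j Hj).
  replace (1 / 16) with ((1 / 4) ^ 2) by field.
  apply pow_incr. split; [lra |]. apply distZ_ge; lra.
Qed.

Lemma sum_ge_large_mode (N x L : R) (n i0 m : nat) :
  0 < N -> 1 <= L -> ln N + 15 <= L ^ 2 / 2 -> L + 1 <= x ->
  INR m * (2 * x * L + INR m + 2) <= x ^ 2 / 2 -> x ^ 2 + 2 * x * L + INR m + 2 <= INR n ->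
  INR i0 <= x ^ 2 < INR i0 + 1 -> 3 / 4 <= b N i0 x ->
  INR m / 16 <= sum1n n (fun i => distZ (b N i x) ^ 2).
Proof.
  intros HN HL HlnN HxL Hm Hn Hi0 Hlarge.
  assert (Hx2 : 0 < x ^ 2) by nra.
  set (h := S (nat_floor (x * L))).
  assert (Hh : x * L <= INR h <= x * L + 1).
  { destruct (nat_floor_spec (x * L)) as [H1 H2]; [nra |]. unfold h. rewrite S_INR. lra. }
  assert (Hgauss : ln N + 15 <= INR h ^ 2 / (2 * x ^ 2)).
  { apply Rle_trans with (L ^ 2 / 2); [exact HlnN |].
    apply Rmult_le_reg_r with (2 * x ^ 2); [lra |].
    replace (INR h ^ 2 / (2 * x ^ 2) * (2 * x ^ 2)) with (INR h ^ 2) by (field; lra).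
    assert (0 <= x * L) by nra. nra. }
  pose proof (b_tail_lt N x i0 h HN ltac:(lra) ltac:(lra) ltac:(nra) Hgauss).
  apply (sum_ge_after_crossing N x n i0 (h + h) m); try lra.
  - rewrite plus_INR. pose proof (pos_INR m). nra.
  - apply INR_le. rewrite !plus_INR. pose proof (pos_INR m). lra.
Qed.

Definition small_mode_bound (r c2 : R) : R := Rmin (9 / 16 * (r ^ 2 * exp (-2) / c2)) (1 / 16).

Lemma small_mode_bound_pos (r c2 : R) : 0 < r -> 0 < c2 -> 0 < small_mode_bound r c2.
Proof.
  intros Hr Hc2. apply Rmin_pos; [| lra]. apply Rmult_lt_0_compat; [lra |].
  apply Rdiv_lt_0_compat; [apply Rmult_lt_0_compat; [apply pow_lt | apply exp_pos] |]; lra.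
Qed.

Lemma small_mode_bound_le (c2 r D M x : R) (i0 : nat) :
  0 < r -> r <= D -> 0 < M -> 1 <= x <= c2 * M -> INR i0 <= x ^ 2 < INR i0 + 1 ->
  small_mode_bound r c2 <= Rmin (3 / 4 * b (D ^ 2 * M) i0 x) (1 / 4) ^ 2.
Proof.
  intros Hr HrD HM Hx Hi0.
  set (F := b (D ^ 2 * M) i0 x).
  assert (Hc2 : 0 < c2) by nra.
  assert (HF2 : r ^ 2 * exp (-2) / c2 <= F ^ 2).
  { pose proof (b_mode_sqr_ge (D ^ 2 * M) x i0 ltac:(nra) ltac:(lra) Hi0) as Hmode.
    eapply Rle_trans; [| exact Hmode].
    assert (r ^ 2 <= D ^ 2) by (apply pow_incr; lra).
    pose proof (exp_pos (-2)).
    apply Rmult_le_reg_r with (c2 * x); [nra |].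
    replace (r ^ 2 * exp (-2) / c2 * (c2 * x)) with (exp (-2) * (r ^ 2 * x)) by (field; lra).
    replace (exp (-2) * (D ^ 2 * M) / x * (c2 * x)) with (exp (-2) * (D ^ 2 * (c2 * M)))
      by (field; lra).
    apply Rmult_le_compat_l; [lra |]. apply Rmult_le_compat; [apply pow2_ge_0 | lra | lra | lra]. }
  assert (0 < F) by (apply b_pos; nra).
  unfold small_mode_bound, Rmin.
  destruct (Rle_dec (3 / 4 * F) (1 / 4)); destruct (Rle_dec _ (1 / 16)); nra.
Qed.

Lemma sum_gt_small_mode (c2 r C K D M x : R) (n i0 : nat) :
  0 < c2 -> 0 < r -> 0 < C -> r <= D -> 1 <= M -> 1 <= ln M ->
  2 * C / small_mode_bound r c2 + 1 <= K -> K * ln M ^ 2 <= x <= c2 * M ->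
  (x + M) ^ 2 <= INR n -> INR i0 <= x ^ 2 < INR i0 + 1 -> D * b M i0 x < 3 / 4 ->
  C * ln M < sum1n n (fun i => distZ (D * b M i x) ^ 2).
Proof.
  intros Hc2 Hr HC HrD HM HL HK Hx Hn Hi0 Hsmall.
  set (L := ln M) in *.
  assert (Hmu : 0 < small_mode_bound r c2) by (apply small_mode_bound_pos; lra).
  set (mu := small_mode_bound r c2) in *.
  assert (HCmu : 0 <= 2 * C / mu) by (apply Rmult_le_pos; [lra | left; apply Rinv_0_lt_compat; lra]).
  assert (HKL : K * L <= x).
  { assert (K * L <= K * L ^ 2); [| lra].
    apply Rmult_le_compat_l; [lra |]. assert (L * 1 <= L * L) by (apply Rmult_le_compat_l; lra). lra. }
  assert (Hx1 : 1 <= x) by (assert (1 * 1 <= K * L) by (apply Rmult_le_compat; lra); lra).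
  rewrite b_scale in Hsmall by lra.
  rewrite (sum1n_ext n _ (fun i => distZ (b (D ^ 2 * M) i x) ^ 2))
    by (intros i; rewrite b_scale by lra; reflexivity).
  pose proof (sum_ge_small_mode (D ^ 2 * M) x n i0 ltac:(nra) Hx1 ltac:(nra) Hi0 Hsmall) as Hs.
  pose proof (small_mode_bound_le c2 r D M x i0 Hr HrD ltac:(lra) ltac:(lra) Hi0) as Hbound.
  fold mu in Hbound.
  assert (x / 2 * mu <= x / 2 * Rmin (3 / 4 * b (D ^ 2 * M) i0 x) (1 / 4) ^ 2)
    by (apply Rmult_le_compat_l; lra).
  assert ((2 * C / mu + 1) * L * mu <= x * mu).
  { apply Rmult_le_compat_r; [lra |]. assert ((2 * C / mu + 1) * L <= K * L); [| lra].
    apply Rmult_le_compat_r; lra. }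
  replace ((2 * C / mu + 1) * L * mu) with (2 * C * L + mu * L) in * by (field; lra).
  assert (0 < mu * L) by (apply Rmult_lt_0_compat; lra).
  lra.
Qed.

Lemma crossing_window_fits (C K L M x : R) (m : nat) :
  0 < C -> 1 <= L -> 2 * (16 * C + 1) * (16 * C + 5) <= K -> K * L ^ 2 <= x -> K * L ^ 2 <= 2 * M ->
  INR m <= (16 * C + 1) * L ->
  L + 1 <= x /\ INR m * (2 * x * L + INR m + 2) <= x ^ 2 / 2 /\ 2 * x * L + INR m + 2 <= 2 * x * M.
Proof.
  intros HC HL HK Hx HKM Hm.
  set (al := 16 * C + 1) in Hm.
  assert (Hal : 1 <= al) by (unfold al; lra).
  assert (HK' : 2 * al * (al + 4) <= K)
    by (replace (2 * al * (al + 4)) with (2 * (16 * C + 1) * (16 * C + 5)) by (unfold al; ring); lra).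
  assert (Hal4 : al + 4 <= K).
  { assert (0 <= (2 * al - 1) * (al + 4)) by (apply Rmult_le_pos; lra). lra. }
  assert (HKL : K * L <= K * L ^ 2).
  { apply Rmult_le_compat_l; [lra |]. assert (L * 1 <= L * L) by (apply Rmult_le_compat_l; lra). lra. }
  assert (Hx5 : 5 * L <= x) by (assert (5 * L <= K * L) by (apply Rmult_le_compat_r; lra); lra).
  assert (HxL : 1 * 1 <= x * L) by (apply Rmult_le_compat; lra).
  assert (al * L <= al * (x * L)).
  { apply Rmult_le_compat_l; [lra |]. assert (L * 1 <= L * x) by (apply Rmult_le_compat_l; lra). lra. }
  assert (Hwin : 2 * x * L + INR m + 2 <= (al + 4) * x * L) by lra.
  split; [lra | split].
  - assert (x * (2 * al * (al + 4) * L ^ 2) <= x * x)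
      by (apply Rmult_le_compat_l; [lra | apply Rle_trans with (K * L ^ 2);
          [apply Rmult_le_compat_r; [apply pow2_ge_0 |] |]; lra]).
    apply Rle_trans with (al * L * ((al + 4) * x * L)); [| lra].
    apply Rmult_le_compat; [apply pos_INR | pose proof (pos_INR m); lra | lra | lra].
  - assert ((al + 4) * L <= K * L) by (apply Rmult_le_compat_r; lra).
    assert ((al + 4) * L * x <= 2 * M * x) by (apply Rmult_le_compat_r; lra). lra.
Qed.

Lemma sum_gt_large_mode (A C K D M x : R) (n i0 : nat) :
  0 <= A -> 0 < C -> 0 < D <= Rpower M A -> 1 <= M -> 4 * A + 34 <= ln M ->
  2 * (16 * C + 1) * (16 * C + 5) <= K -> K * ln M ^ 2 <= x -> K * ln M ^ 2 <= 2 * M ->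
  (x + M) ^ 2 <= INR n -> INR i0 <= x ^ 2 < INR i0 + 1 -> 3 / 4 <= D * b M i0 x ->
  C * ln M < sum1n n (fun i => distZ (D * b M i x) ^ 2).
Proof.
  intros HA HC HD HM HL HK Hx HKM Hn Hi0 Hlarge.
  set (L := ln M) in *.
  assert (HL1 : 1 <= L) by lra.
  set (m := S (nat_floor (16 * C * L))).
  assert (Hm : 16 * C * L < INR m <= (16 * C + 1) * L).
  { destruct (nat_floor_spec (16 * C * L)); [apply Rmult_le_pos; lra |].
    unfold m. rewrite S_INR. lra. }
  destruct (crossing_window_fits C K L M x m HC HL1 HK Hx HKM ltac:(lra)) as [HLx [Hmx Hidx]].
  assert (HlnN : ln (D ^ 2 * M) + 15 <= L ^ 2 / 2).
  { assert (ln D <= A * L) by (rewrite <- (ln_exp (A * L)); apply ln_le; [lra | exact (proj2 HD)]).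
    rewrite ln_mult, ln_pow by (try apply pow_lt; lra). simpl INR. fold L.
    assert ((4 * A + 34) * L <= L * L) by (apply Rmult_le_compat_r; lra). lra. }
  rewrite b_scale in Hlarge by lra.
  rewrite (sum1n_ext n _ (fun i => distZ (b (D ^ 2 * M) i x) ^ 2))
    by (intros i; rewrite b_scale by lra; reflexivity).
  pose proof (pow2_ge_0 M).
  pose proof (sum_ge_large_mode (D ^ 2 * M) x L n i0 m ltac:(nra) HL1 HlnN HLx Hmx ltac:(lra) Hi0 Hlarge).
  lra.
Qed.

Theorem theorem3p4 :
  forall c1 c2 A C r : R,
    0 < c1 -> c1 < c2 -> 0 < A -> 0 < C -> 0 < r ->
    exists N0 : R,
      forall (n : nat) (M : R),
        N0 <= M ->
        c2 * M <= sqrt (INR n) - M ->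
        forall x : R, c1 * M <= x <= c2 * M ->
        ~ (exists D : R, r <= D <= Rpower M A /\
             sum1n n (fun i => (distZ (D * b M i x)) ^ 2) <= C * ln M).
Proof.
  intros c1 c2 A C r Hc1 Hc12 HA HC Hr.
  assert (HCmu : 0 <= 2 * C / small_mode_bound r c2).
  { apply Rmult_le_pos; [lra |]. left; apply Rinv_0_lt_compat, small_mode_bound_pos; lra. }
  assert (Hal : 0 <= 2 * (16 * C + 1) * (16 * C + 5)) by (apply Rmult_le_pos; lra).
  set (K := 2 * C / small_mode_bound r c2 + 1 + 2 * (16 * C + 1) * (16 * C + 5) + 4 * A + 34).
  destruct (ln_sq_eventually_le K (Rmin c1 2) ltac:(apply Rmin_pos; lra)) as [N0 HN0].
  exists N0. intros n M HM Hsqrt x Hx [D [[HrD HDM] Hsum]].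
  destruct (HN0 M HM) as [HM1 [HL HLM]].
  assert (Hxbig : K * ln M ^ 2 <= x).
  { assert (Rmin c1 2 * M <= c1 * M) by (apply Rmult_le_compat_r; [lra | apply Rmin_l]). lra. }
  assert (HMbig : K * ln M ^ 2 <= 2 * M).
  { assert (Rmin c1 2 * M <= 2 * M) by (apply Rmult_le_compat_r; [lra | apply Rmin_r]). lra. }
  assert (Hn : (x + M) ^ 2 <= INR n).
  { assert (0 < c1 * M) by (apply Rmult_lt_0_compat; lra).
    rewrite <- (pow2_sqrt (INR n)) by apply pos_INR. apply pow_incr. lra. }
  pose proof (nat_floor_spec (x ^ 2) (pow2_ge_0 x)) as Hi0.
  destruct (Rlt_le_dec (D * b M (nat_floor (x ^ 2)) x) (3 / 4)) as [Hsmall | Hlarge].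
  - pose proof (sum_gt_small_mode c2 r C K D M x n _ ltac:(lra) Hr HC HrD HM1 ltac:(unfold K in HL; lra)
      ltac:(unfold K; lra) ltac:(lra) Hn Hi0 Hsmall). lra.
  - pose proof (sum_gt_large_mode A C K D M x n _ ltac:(lra) HC ltac:(lra) HM1
      ltac:(unfold K in HL; lra) ltac:(unfold K; lra) Hxbig HMbig Hn Hi0 Hlarge). lra.
Qed.
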